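(* Let $\mathbb{X}$ be a regular CW complex equipped with an acyclic partial matching $\mu$, and let $\Sigma = \{(x_\bullet > y_\bullet)\}$ denote the collection of entrance paths of $\mathbb{X}$ which correspond to the matchings $\mu(y_\bullet) = x_\bullet$. Then $\Sigma$ is a Morse system on the entrance path category $\mathbf{Ent}\,\mathbb{X}$.
   Context: A p-category is a small category enriched over posets; $f\Rightarrow g$ denotes the order on a hom-poset and $f\circ g$ denotes composition ``$f$ then $g$''. A morphism $f:x\to y$ is an atom if it is minimal in $\mathbf{E}(x,y)$, $x=y$ implies $f=1_x$, and $g\circ h\Rightarrow f$ with $g:x\to z$, $h:z\to y$ forces $(g,h)=(1_x,f)$ or $(f,1_y)$. A p-category $\mathbf{E}$ is cellular if every nonempty hom-poset contains an atom. For a regular CW complex, $x>y$ means the closure of cell $y$ lies in the boundary of $x$; the entrance path category $\mathbf{Ent}\,\mathbb{X}$ has cells as objects, strictly descending sequences $(x=x_0>\cdots>x_k=y)$ as morphisms $x\to y$, ordered by subsequence inclusion, composed by concatenation. An acyclic partial matching is a partition of cells into $D,U,M$ with a bijection $\mu:D\to U$ such that each $d$ is a codimension-one face of $\mu(d)$ and the transitive closure of ($d\prec_\mu d'$ iff $d$ is a codimension-one face of $\mu(d')$) is a partial order. A Morse system on a cellular category $\mathbf{E}$ is a collection $\Sigma=\{f_\bullet:x_\bullet\to y_\bullet\}$ satisfying: (Exhaustion) each $f:x\to y$ in $\Sigma$ is the atom of $\mathbf{E}(x,y)$ with $x\neq y$, and no other morphism of $\Sigma$ has as source or target any $w$ with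 $\mathbf{E}(x,w)\neq\varnothing\neq\mathbf{E}(w,y)$; (Order) the transitive closure of $f_0\blacktriangleright f_1$ iff $\mathbf{E}(x_0,y_1)\neq\varnothing$ is a partial order on $\Sigma$; (Lifting) for distinct $f_0,f_1\in\Sigma$, if $g:x_0\to x_1$ and $g':y_0\to y_1$ satisfy $f_0\circ g'\Rightarrow g\circ f_1$, then there is $p:y_0\to x_1$ with $f_0\circ p\Rightarrow g$ and $g'\Rightarrow p\circ f_1$; (Switching) for distinct $f_0,f_1\in\Sigma$, if $\mathbf{E}(x_0,x_1)$ and $\mathbf{E}(y_0,y_1)$ are nonempty with atoms $h,\ell$, and some $v:x_0\to y_1$ satisfies $f_0\circ\ell\Rightarrow v$ and $h\circ f_1\Rightarrow v$, then $\mathbf{E}(y_0,x_1)$ is nonempty and its atom $q$ satisfies $f_0\circ q\circ f_1\Rightarrow v$. *)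

From Stdlib Require Import List Relations.
Import ListNotations.
Set Implicit Arguments.

(* p-categories: categories enriched over posets.                      *)
(* [hle f g] is the order  f => g  on a hom-poset;                     *)
(* [comp f g] is composition "f then g".                               *)
Record PCat := {
  Ob : Type;
  Hom : Ob -> Ob -> Type;
  hle : forall x y, Hom x y -> Hom x y -> Prop;
  idm : forall x, Hom x x;
  comp : forall x y z, Hom x y -> Hom y z -> Hom x z
}.
Arguments hle {p x y} _ _.
Arguments idm {p} x.
Arguments comp {p x y z} _ _.

Definition is_pcat (E : PCat) : Prop :=
  (forall x y (f : Hom E x y), hle f f) /\
  (forall x y (f g h : Hom E x y), hle f g -> hle g h -> hle f h) /\
  (forall x y (f g : Hom E x y), hle f g -> hle g f -> f = g) /\
  (forall x y (f : Hom E x y), comp (idm x) f = f) /\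
  (forall x y (f : Hom E x y), comp f (idm y) = f) /\
  (forall x y z w (f : Hom E x y) (g : Hom E y z) (h : Hom E z w),
      comp (comp f g) h = comp f (comp g h)) /\
  (forall x y z (f f' : Hom E x y) (g g' : Hom E y z),
      hle f f' -> hle g g' -> hle (comp f g) (comp f' g')).

Definition is_atom (E : PCat) (x y : Ob E) (f : Hom E x y) : Prop :=
  (forall g : Hom E x y, hle g f -> g = f) /\
  (forall e : x = y, f = eq_rect x (Hom E x) (idm x) y e) /\
  (forall z (g : Hom E x z) (h : Hom E z y), hle (comp g h) f ->
     existT (fun w => (Hom E x w * Hom E w y)%type) z (g, h)
       = existT (fun w => (Hom E x w * Hom E w y)%type) x (idm x, f)
     \/
     existT (fun w => (Hom E x w * Hom E w y)%type) z (g, h)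
       = existT (fun w => (Hom E x w * Hom E w y)%type) y (f, idm y)).

Arguments is_atom {E x y} f.

Definition cellular (E : PCat) : Prop :=
  forall x y : Ob E, inhabited (Hom E x y) -> exists f : Hom E x y, is_atom f.

Record Arr (E : PCat) := mkArr { asrc : Ob E; atgt : Ob E; amor : Hom E asrc atgt }.
Arguments asrc {E} _.
Arguments atgt {E} _.
Arguments amor {E} _.

Definition partial_order_on (A : Type) (P : A -> Prop) (R : A -> A -> Prop) : Prop :=
  (forall a, P a -> R a a) /\
  (forall a b c, P a -> P b -> P c -> R a b -> R b c -> R a c) /\
  (forall a b, P a -> P b -> R a b -> R b a -> a = b).

Definition morse_system (E : PCat) (S : Arr E -> Prop) : Prop :=
  is_pcat E /\ cellular E /\
  (* Exhaustion *)
  (forall a, S a ->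
     is_atom (amor a) /\ asrc a <> atgt a /\
     (forall b, S b -> b <> a -> forall w : Ob E,
        inhabited (Hom E (asrc a) w) -> inhabited (Hom E w (atgt a)) ->
        asrc b <> w /\ atgt b <> w)) /\
  (* Order *)
  partial_order_on S
    (clos_trans _ (fun a b => S a /\ S b /\ inhabited (Hom E (asrc a) (atgt b)))) /\
  (* Lifting *)
  (forall a0 a1, S a0 -> S a1 -> a0 <> a1 ->
     forall (g : Hom E (asrc a0) (asrc a1)) (g' : Hom E (atgt a0) (atgt a1)),
       hle (comp (amor a0) g') (comp g (amor a1)) ->
       exists p : Hom E (atgt a0) (asrc a1),
         hle (comp (amor a0) p) g /\ hle g' (comp p (amor a1))) /\
  (* Switching *)
  (forall a0 a1, S a0 -> S a1 -> a0 <> a1 ->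
     forall (h : Hom E (asrc a0) (asrc a1)) (l : Hom E (atgt a0) (atgt a1)),
       is_atom h -> is_atom l ->
       forall v : Hom E (asrc a0) (atgt a1),
         hle (comp (amor a0) l) v -> hle (comp h (amor a1)) v ->
         inhabited (Hom E (atgt a0) (asrc a1)) /\
         (forall q : Hom E (atgt a0) (asrc a1), is_atom q ->
            hle (comp (comp (amor a0) q) (amor a1)) v)).

Arguments morse_system E S : clear implicits.

(* Regular CW complexes, through their face poset.      *)
(* [cgt x y] : x > y, i.e. the closure of cell y lies in the boundary  *)
(* of cell x;  [cdim x] : the dimension of cell x.                     *)
Record RegCW := {
  cell : Type;
  cgt : cell -> cell -> Prop;
  cdim : cell -> nat;
  cgt_irrefl : forall x, ~ cgt x x;
  cgt_trans : forall x y z, cgt x y -> cgt y z -> cgt x z;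
  cgt_dim : forall x y, cgt x y -> cdim y < cdim x
}.
Arguments cgt {r} _ _.
Arguments cdim {r} _.

Definition codim1_face (X : RegCW) (d x : cell X) : Prop :=
  cgt x d /\ cdim x = S (cdim d).

Arguments codim1_face {X} d x.

Definition acyclic_partial_matching (X : RegCW) (D U M : cell X -> Prop)
  (mu : cell X -> cell X) : Prop :=
  (forall c, D c \/ U c \/ M c) /\
  (forall c, ~ (D c /\ U c)) /\ (forall c, ~ (D c /\ M c)) /\
  (forall c, ~ (U c /\ M c)) /\
  (forall d, D d -> U (mu d)) /\
  (forall d d', D d -> D d' -> mu d = mu d' -> d = d') /\
  (forall u, U u -> exists d, D d /\ mu d = u) /\
  (forall d, D d -> codim1_face d (mu d)) /\
  partial_order_on D
    (clos_trans _ (fun d d' => D d /\ D d' /\ codim1_face d (mu d'))).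

(* A morphism x -> y is a sequence (x = x_0 > x_1 > ... > x_k = y),    *)
(* stored as x :: eseq with eseq = [x_1; ...; x_k].                    *)
Section Ent.
Variable X : RegCW.

Fixpoint desc (x : cell X) (s : list (cell X)) : Prop :=
  match s with
  | [] => True
  | z :: s' => cgt x z /\ desc z s'
  end.

Fixpoint lastc (x : cell X) (s : list (cell X)) : cell X :=
  match s with
  | [] => x
  | z :: s' => lastc z s'
  end.

Record EntHom (x y : cell X) := {
  eseq : list (cell X);
  edesc : desc x eseq;
  elast : lastc x eseq = y
}.

Inductive subseq {A : Type} : list A -> list A -> Prop :=
  | subseq_nil : forall l, subseq [] l
  | subseq_keep : forall a l l', subseq l l' -> subseq (a :: l) (a :: l')
  | subseq_skip : forall a l l', subseq l l' -> subseq l (a :: l').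

Definition ent_le (x y : cell X) (f g : EntHom x y) : Prop :=
  subseq (x :: eseq f) (x :: eseq g).

Definition ent_id (x : cell X) : EntHom x x :=
  {| eseq := []; edesc := I; elast := eq_refl |}.

Lemma lastc_app (s t : list (cell X)) (x : cell X) :
  lastc x (s ++ t) = lastc (lastc x s) t.
Proof. revert x; induction s as [|z s IH]; intro x; simpl; auto. Qed.

Lemma desc_app (s t : list (cell X)) (x : cell X) :
  desc x s -> desc (lastc x s) t -> desc x (s ++ t).
Proof.
  revert x; induction s as [|z s IH]; intros x Hs Ht; simpl in *; auto.
  destruct Hs as [H1 H2]; split; auto.
Qed.

Lemma ent_comp_desc (x y z : cell X) (f : EntHom x y) (g : EntHom y z) :
  desc x (eseq f ++ eseq g).
Proof.
  apply desc_app; [exact (edesc f)|]. rewrite (elast f). exact (edesc g).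
Qed.

Lemma ent_comp_last (x y z : cell X) (f : EntHom x y) (g : EntHom y z) :
  lastc x (eseq f ++ eseq g) = z.
Proof. rewrite lastc_app, (elast f). exact (elast g). Qed.

Definition ent_comp (x y z : cell X) (f : EntHom x y) (g : EntHom y z) : EntHom x z :=
  {| eseq := eseq f ++ eseq g; edesc := ent_comp_desc f g; elast := ent_comp_last f g |}.

End Ent.

Definition Ent (X : RegCW) : PCat :=
  {| Ob := cell X; Hom := @EntHom X; hle := @ent_le X; idm := @ent_id X;
     comp := @ent_comp X |}.

Definition matching_system (X : RegCW) (D : cell X -> Prop) (mu : cell X -> cell X)
  (a : Arr (Ent X)) : Prop :=
  D (atgt a) /\ asrc a = mu (atgt a) /\ eseq (amor a) = [atgt a].
Arguments matching_system X D mu a : clear implicits.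
Arguments acyclic_partial_matching X D U M mu : clear implicits.

(* Entrance paths are strictly descending chains of cells, so the subsequence
   order between two paths with the same endpoints is inclusion of their sets
   of cells, and the atoms of Ent X are the one-step paths (x > y).  A matched
   pair (mu y > y) has codimension one, so no cell lies strictly between mu y
   and y; with the facts that matched cells lie in D and their partners in U,
   Exhaustion, Lifting and Switching follow by locating cells inside
   descending chains.  For Order, a path mu y0 -> y1 between two elements of
   Sigma forces dim y1 <= dim y0, with equality exactly when y1 is a
   codimension-one face of mu y0; so a cycle in Sigma stays in one dimension
   and is a cycle of the acyclic matching. *)
From Stdlib Require Import Arith List Relations Sorted Lia ProofIrrelevance.
Import ListNotations.

Section Subseq.
Context {A : Type}.

Lemma subseq_refl (l : list A) : subseq l l.
Proof. induction l; constructor; auto. Qed.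

Lemma subseq_trans {l1 l2 l3 : list A} :
  subseq l1 l2 -> subseq l2 l3 -> subseq l1 l3.
Proof.
  intros H12 H23; revert l1 H12; induction H23; intros l1 H12.
  - inversion H12; constructor.
  - inversion H12; subst; constructor; auto.
  - constructor; auto.
Qed.

Lemma subseq_In {l l' : list A} z : subseq l l' -> In z l -> In z l'.
Proof. induction 1; simpl; intuition. Qed.

Lemma subseq_length {l l' : list A} : subseq l l' -> length l <= length l'.
Proof. induction 1; simpl; lia. Qed.

Lemma subseq_length_eq {l l' : list A} :
  subseq l l' -> length l' <= length l -> l = l'.
Proof.
  induction 1; simpl; intro Hlen.
  - destruct l; simpl in *; auto; lia.
  - f_equal; apply IHsubseq; lia.
  - apply subseq_length in H; lia.
Qed.

End Subseq.

Section StrictlySorted.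
Context {A : Type} {R : A -> A -> Prop}.
Hypothesis R_irrefl : forall a, ~ R a a.
Hypothesis R_trans : forall a b c, R a b -> R b c -> R a c.

Lemma StronglySorted_app_In {l1 l2 a b} :
  StronglySorted R (l1 ++ l2) -> In a l1 -> In b l2 -> R a b.
Proof.
  induction l1 as [|c l1 IH]; simpl; intros Hs Ha Hb; [contradiction|].
  inversion Hs as [|? ? Hs' Hc]; subst.
  destruct Ha as [<-|Ha]; auto.
  rewrite Forall_forall in Hc; apply Hc, in_or_app; auto.
Qed.

Lemma StronglySorted_In_after {l1 a l2 z} :
  StronglySorted R (l1 ++ a :: l2) -> In z (l1 ++ a :: l2) -> R a z -> In z l2.
Proof.
  intros Hs Hz Haz; apply in_app_or in Hz as [Hz|[<-|Hz]]; auto.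
  - destruct (R_irrefl z); apply R_trans with a; auto.
    eapply StronglySorted_app_In; eauto; simpl; auto.
  - destruct (R_irrefl _ Haz).
Qed.

Lemma StronglySorted_In_trichotomy {l a b} :
  StronglySorted R l -> In a l -> In b l -> a = b \/ R a b \/ R b a.
Proof.
  induction 1 as [|c l _ IH Hc]; simpl; [tauto|].
  rewrite Forall_forall in Hc.
  intros [<-|Ha] [<-|Hb]; auto.
Qed.

Lemma StronglySorted_incl_subseq {l l'} :
  StronglySorted R l -> StronglySorted R l' -> incl l l' -> subseq l l'.
Proof.
  revert l; induction l' as [|b l' IH]; intros l Hl Hl' Hincl.
  { rewrite (incl_l_nil Hincl); constructor. }
  destruct l as [|a l]; [constructor|].
  inversion Hl as [|? ? Hl0 Ha]; inversion Hl' as [|? ? Hl'0 Hb]; subst.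
  rewrite Forall_forall in Ha, Hb.
  destruct (Hincl a (or_introl eq_refl)) as [<-|Hab].
  - constructor; apply IH; auto.
    intros z Hz; destruct (Hincl z (or_intror Hz)) as [<-|]; auto.
    destruct (R_irrefl _ (Ha _ Hz)).
  - constructor; apply IH; auto.
    intros z [<-|Hz]; auto.
    destruct (Hincl z (or_intror Hz)) as [<-|]; auto.
    destruct (R_irrefl b); eauto.
Qed.

End StrictlySorted.

Section EntrancePaths.
Context {X : RegCW}.

Lemma cgt_neq {x y : cell X} : cgt x y -> x <> y.
Proof. intros H <-; exact (cgt_irrefl X x H). Qed.

Lemma codim1_face_no_between {x w y : cell X} :
  codim1_face y x -> cgt x w -> cgt w y -> False.
Proof. intros [_ Hdim] Hxw Hwy; apply cgt_dim in Hxw, Hwy; lia. Qed.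

Lemma desc_StronglySorted (x : cell X) s : desc X x s -> StronglySorted cgt (x :: s).
Proof.
  revert x; induction s as [|z s IH]; intros x Hd; simpl in Hd.
  - repeat constructor.
  - destruct Hd as [Hxz Hd]; specialize (IH z Hd).
    constructor; [exact IH|].
    inversion IH as [|? ? _ Hz]; subst.
    constructor; [exact Hxz|].
    eapply Forall_impl; [|exact Hz]; intros w; apply cgt_trans, Hxz.
Qed.

Lemma desc_app_inv (x : cell X) s t :
  desc X x (s ++ t) -> desc X (lastc X x s) t.
Proof.
  revert x; induction s as [|w s IH]; simpl; intros x Hd; [exact Hd|].
  apply IH, Hd.
Qed.

Lemma lastc_In (x : cell X) s : In (lastc X x s) (x :: s).
Proof.
  revert x; induction s as [|z s IH]; intros x; simpl; auto.
  destruct (IH z); auto.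
Qed.

Lemma EntHom_sorted {x y : cell X} (f : EntHom X x y) :
  StronglySorted cgt (x :: eseq f).
Proof. apply desc_StronglySorted, edesc. Qed.

Lemma EntHom_cgt_In {x y : cell X} (f : EntHom X x y) {z} : In z (eseq f) -> cgt x z.
Proof.
  pose proof (EntHom_sorted f) as Hs; inversion Hs as [|? ? _ Hf]; subst.
  rewrite Forall_forall in Hf; auto.
Qed.

Lemma EntHom_target_In {x y : cell X} (f : EntHom X x y) : In y (x :: eseq f).
Proof. pattern y at 1; rewrite <- (elast f); apply lastc_In. Qed.

Lemma EntHom_eq_or_cgt {x y : cell X} (f : EntHom X x y) : x = y \/ cgt x y.
Proof.
  destruct (EntHom_target_In f) as [|Hy]; auto.
  right; exact (EntHom_cgt_In f Hy).
Qed.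

Lemma EntHom_ext {x y : cell X} (f g : EntHom X x y) : eseq f = eseq g -> f = g.
Proof.
  destruct f as [s d l], g as [s' d' l']; simpl; intros <-.
  f_equal; apply proof_irrelevance.
Qed.

Lemma EntHom_endo_nil {x : cell X} (f : EntHom X x x) : eseq f = [].
Proof.
  destruct (eseq f) as [|z s] eqn:E; [reflexivity|].
  pose proof (elast f) as Hl; rewrite E in Hl; simpl in Hl.
  pose proof (lastc_In z s) as Hx; rewrite Hl, <- E in Hx.
  destruct (cgt_irrefl X x (EntHom_cgt_In f Hx)).
Qed.

Lemma EntHom_endo_eq {x : cell X} (f g : EntHom X x x) : f = g.
Proof. apply EntHom_ext; rewrite !EntHom_endo_nil; auto. Qed.

Definition ent_edge {x y : cell X} (H : cgt x y) : EntHom X x y :=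
  {| eseq := [y]; edesc := conj H I; elast := eq_refl |}.

Lemma ent_le_incl {x y : cell X} (f g : EntHom X x y) :
  ent_le f g <-> incl (x :: eseq f) (x :: eseq g).
Proof.
  split; intro H.
  - intros z; apply subseq_In, H.
  - apply (StronglySorted_incl_subseq (cgt_irrefl X) (cgt_trans X));
      auto using EntHom_sorted.
Qed.

Lemma Ent_is_pcat : is_pcat (Ent X).
Proof.
  repeat split; cbn.
  - intros x y f; apply subseq_refl.
  - intros x y f g h; apply subseq_trans.
  - intros x y f g Hfg Hgf; apply EntHom_ext.
    pose proof (subseq_length_eq Hfg (subseq_length Hgf)); congruence.
  - intros x y f; apply EntHom_ext; reflexivity.
  - intros x y f; apply EntHom_ext; apply app_nil_r.
  - intros x y z w f g h; apply EntHom_ext; symmetry; apply app_assoc.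
  - intros x y z f f' g g' Hf Hg; apply ent_le_incl; simpl.
    apply ent_le_incl in Hf, Hg.
    intros c [<-|Hc]; [now left|].
    apply in_app_or in Hc as [Hc|Hc].
    + destruct (Hf c (or_intror Hc)) as [|Hc']; [now left|].
      right; apply in_or_app; auto.
    + destruct (Hg c (or_intror Hc)) as [<-|Hc'].
      * destruct (EntHom_target_In f') as [|Hy]; [now left|].
        right; apply in_or_app; auto.
      * right; apply in_or_app; auto.
Qed.

Lemma ent_id_atom (x : cell X) : @is_atom (Ent X) x x (ent_id X x).
Proof.
  repeat split.
  - intros; apply EntHom_endo_eq.
  - intros; apply EntHom_endo_eq.
  - intros z g h H; cbn in H; apply subseq_length in H.
    destruct g as [[|c gs] gd gl], h as [hs hd hl]; simpl in *; [|lia].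
    subst z; left; repeat f_equal; apply EntHom_endo_eq.
Qed.

Lemma ent_edge_atom {x y : cell X} (H : cgt x y) : @is_atom (Ent X) x y (ent_edge H).
Proof.
  pose proof (cgt_neq H) as Hxy.
  repeat split.
  - intros [[|c gs] gd gl] Hg; apply EntHom_ext; simpl in *; [destruct (Hxy gl)|].
    unfold ent_le in Hg; simpl in Hg.
    apply subseq_length_eq in Hg; simpl; [congruence | lia].
  - intros e; congruence.
  - intros z [gs gd gl] [hs hd hl] Hgh; unfold ent_le in Hgh; simpl in Hgh.
    assert (Hne : gs ++ hs <> []).
    { intros E; apply app_eq_nil in E as [-> ->]; simpl in *.
      destruct Hxy; rewrite gl; exact hl. }
    assert (Hs : gs ++ hs = [y]).
    { apply subseq_length_eq in Hgh; [injection Hgh as E; exact E|].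
      simpl; destruct (gs ++ hs); [destruct (Hne eq_refl) | simpl; lia]. }
    destruct gs as [|c gs]; simpl in *.
    + subst z hs; left; repeat f_equal; [apply EntHom_endo_eq | apply EntHom_ext; reflexivity].
    + injection Hs as -> Hs; apply app_eq_nil in Hs as [-> ->]; simpl in *; subst z.
      right; repeat f_equal; [apply EntHom_ext; reflexivity | apply EntHom_endo_eq].
Qed.

(* The one-step path (x > y) lies below f, so minimality of f forces equality. *)
Lemma ent_atom_edge {x y : cell X} (f : EntHom X x y) :
  @is_atom (Ent X) x y f -> x <> y -> eseq f = [y].
Proof.
  intros [Hmin _] Hxy.
  destruct (EntHom_eq_or_cgt f) as [|H]; [contradiction|].
  rewrite <- (Hmin (ent_edge H)); [reflexivity|].
  apply ent_le_incl; intros z [<-|[<-|[]]]; [now left | apply EntHom_target_In].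
Qed.

Lemma Ent_cellular : cellular (Ent X).
Proof.
  intros x y [f]; destruct (EntHom_eq_or_cgt f) as [<-|H].
  - exists (ent_id X x); apply ent_id_atom.
  - exists (ent_edge H); apply ent_edge_atom.
Qed.

Lemma EntHom_codim1_between {x w y : cell X} :
  codim1_face y x -> EntHom X x w -> EntHom X w y -> w = x \/ w = y.
Proof.
  intros Hc f g.
  destruct (EntHom_eq_or_cgt f) as [|Hxw], (EntHom_eq_or_cgt g) as [|Hwy]; auto.
  destruct (codim1_face_no_between Hc Hxw Hwy).
Qed.

Lemma EntHom_suffix {x y : cell X} (f : EntHom X x y) {s1 z s2} :
  eseq f = s1 ++ z :: s2 -> { p : EntHom X z y | eseq p = s2 }.
Proof.
  intros E.
  assert (Hd : desc X z s2).
  { pose proof (edesc f) as Hd; rewrite E in Hd.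
    exact (proj2 (desc_app_inv x s1 (z :: s2) Hd)). }
  assert (Hl : lastc X z s2 = y).
  { rewrite <- (elast f), E, lastc_app; reflexivity. }
  exact (exist _ {| eseq := s2; edesc := Hd; elast := Hl |} eq_refl).
Qed.

Lemma ent_lifting {x0 y0 x1 y1 : cell X} (H0 : cgt x0 y0) (H1 : cgt x1 y1) :
  y0 <> y1 ->
  forall (g : EntHom X x0 x1) (g' : EntHom X y0 y1),
    ent_le (ent_comp (ent_edge H0) g') (ent_comp g (ent_edge H1)) ->
    exists p : EntHom X y0 x1,
      ent_le (ent_comp (ent_edge H0) p) g /\ ent_le g' (ent_comp p (ent_edge H1)).
Proof.
  intros Hy g g' Hle.
  apply ent_le_incl in Hle; simpl in Hle.
  assert (Hin : In y0 (eseq g)).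
  { destruct (Hle y0) as [E|Hin]; simpl; auto.
    - destruct (cgt_neq H0 E).
    - apply in_app_or in Hin as [|[E|[]]]; [auto | destruct (Hy (eq_sym E))]. }
  destruct (in_split _ _ Hin) as (s1 & s2 & Eg).
  destruct (EntHom_suffix g Eg) as [p Ep].
  exists p; split; apply ent_le_incl; simpl; rewrite ?Eg, Ep.
  - intros z [<-|[<-|Hz]]; simpl; rewrite ?in_app_iff; simpl; auto.
  - intros z [<-|Hz]; [now left|right].
    assert (Hsorted : StronglySorted cgt ((x0 :: s1) ++ y0 :: (s2 ++ [y1]))).
    { pose proof (EntHom_sorted (ent_comp g (ent_edge H1))) as Hs; simpl in Hs.
      rewrite Eg, <- app_assoc in Hs; exact Hs. }
    apply (StronglySorted_In_after (cgt_irrefl X) (cgt_trans X) Hsorted).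
    + replace ((x0 :: s1) ++ y0 :: s2 ++ [y1]) with (x0 :: eseq g ++ [y1])
        by (rewrite Eg, <- app_assoc; reflexivity).
      apply Hle; simpl; auto.
    + exact (EntHom_cgt_In g' Hz).
Qed.

Lemma ent_switching {x0 y0 x1 y1 : cell X} (H0 : cgt x0 y0) (H1 : cgt x1 y1) :
  codim1_face y1 x1 -> y0 <> x1 -> y0 <> y1 ->
  forall (h : EntHom X x0 x1) (l : EntHom X y0 y1) (v : EntHom X x0 y1),
    ent_le (ent_comp (ent_edge H0) l) v -> ent_le (ent_comp h (ent_edge H1)) v ->
    inhabited (EntHom X y0 x1) /\
    (forall q : EntHom X y0 x1, @is_atom (Ent X) y0 x1 q ->
       ent_le (ent_comp (ent_comp (ent_edge H0) q) (ent_edge H1)) v).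
Proof.
  intros Hc Hyx Hyy h l v Hl Hh.
  apply ent_le_incl in Hl, Hh; simpl in Hl, Hh.
  assert (Hy0 : In y0 (x0 :: eseq v)) by (apply Hl; simpl; auto).
  assert (Hx1 : In x1 (x0 :: eseq v)).
  { apply Hh; destruct (EntHom_target_In h) as [|Hx1]; [now left|].
    right; apply in_or_app; auto. }
  assert (Hgt : cgt y0 x1).
  { destruct (StronglySorted_In_trichotomy (EntHom_sorted v) Hy0 Hx1) as [|[|Hx1y0]];
      [contradiction | assumption|].
    destruct (EntHom_eq_or_cgt l) as [|Hy0y1]; [contradiction|].
    destruct (codim1_face_no_between Hc Hx1y0 Hy0y1). }
  split; [exact (inhabits (ent_edge Hgt))|].
  intros q Hq; apply ent_le_incl; simpl.
  rewrite (ent_atom_edge q Hq Hyx).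
  intros z [<-|[<-|[<-|[<-|[]]]]]; auto using EntHom_target_In; now left.
Qed.

End EntrancePaths.

Section MatchingSystem.
Context {X : RegCW} {D U M : cell X -> Prop} {mu : cell X -> cell X}.
Hypothesis Hmatch : acyclic_partial_matching X D U M mu.

Lemma mu_codim1 {d} : D d -> codim1_face d (mu d).
Proof. destruct Hmatch as (_ & _ & _ & _ & _ & _ & _ & H & _); auto. Qed.

Lemma mu_inj {d d'} : D d -> D d' -> mu d = mu d' -> d = d'.
Proof. destruct Hmatch as (_ & _ & _ & _ & _ & H & _); auto. Qed.

Lemma mu_neq_down {d d'} : D d -> D d' -> mu d <> d'.
Proof.
  destruct Hmatch as (_ & HDU & _ & _ & HU & _).
  intros Hd Hd' <-; apply (HDU (mu d)); auto.
Qed.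

Lemma matching_system_edge {a} :
  matching_system X D mu a ->
  exists y (H : cgt (mu y) y), D y /\ a = @mkArr (Ent X) (mu y) y (ent_edge H).
Proof.
  destruct a as [x y f]; intros (Hy & Ex & Ef); simpl in *; subst x.
  exists y, (proj1 (mu_codim1 Hy)); split; auto.
  f_equal; apply EntHom_ext; exact Ef.
Qed.

Lemma matching_system_target_inj {a b} :
  matching_system X D mu a -> matching_system X D mu b -> atgt a = atgt b -> a = b.
Proof.
  intros Ha Hb; destruct (matching_system_edge Ha) as (y & H & _ & ->).
  destruct (matching_system_edge Hb) as (y' & H' & _ & ->); simpl; intros <-.
  rewrite (proof_irrelevance _ H H'); reflexivity.
Qed.

Lemma matching_system_exhaustion a :
  matching_system X D mu a ->
  is_atom (amor a) /\ asrc a <> atgt a /\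
  (forall b, matching_system X D mu b -> b <> a -> forall w : cell X,
     inhabited (Hom (Ent X) (asrc a) w) -> inhabited (Hom (Ent X) w (atgt a)) ->
     asrc b <> w /\ atgt b <> w).
Proof.
  intros Ha; destruct (matching_system_edge Ha) as (y & H & Hy & ->); simpl.
  split; [apply ent_edge_atom|]; split; [apply cgt_neq, H|].
  intros b Hb Hba w [f] [g].
  assert (Hyb : atgt b <> y)
    by (intros E; apply Hba, matching_system_target_inj; auto).
  destruct (matching_system_edge Hb) as (y' & H' & Hy' & ->); simpl in *.
  assert (Hmu : mu y' <> mu y) by (intros E; apply Hyb, mu_inj; auto).
  destruct (EntHom_codim1_between (mu_codim1 Hy) f g) as [-> | ->];
    split; auto using mu_neq_down.
  intros E; apply (mu_neq_down Hy Hy'); auto.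
Qed.

Definition matching_rel (d d' : cell X) : Prop := D d /\ D d' /\ codim1_face d (mu d').

Definition matching_system_rel (a b : Arr (Ent X)) : Prop :=
  matching_system X D mu a /\ matching_system X D mu b /\
  inhabited (Hom (Ent X) (asrc a) (atgt b)).

Lemma matching_rel_reach_dim {d d'} :
  clos_trans _ matching_rel d d' -> cdim d = cdim d'.
Proof.
  induction 1 as [d d' (_ & Hd' & _ & Hdim)|]; [|congruence].
  destruct (mu_codim1 Hd') as [_ Hdim']; congruence.
Qed.

Lemma matching_system_rel_dim {a b} :
  matching_system_rel a b ->
  cdim (atgt b) < cdim (atgt a) \/ matching_rel (atgt b) (atgt a).
Proof.
  intros (Ha & Hb & [f]).
  destruct (matching_system_edge Ha) as (y & H & Hy & ->).
  destruct (matching_system_edge Hb) as (y' & H' & Hy' & ->); simpl in *.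
  destruct (EntHom_eq_or_cgt f) as [E|Hgt]; [destruct (mu_neq_down Hy Hy' E)|].
  pose proof (cgt_dim _ _ _ Hgt) as Hlt; destruct (mu_codim1 Hy) as [_ Hdim].
  destruct (Nat.eq_dec (cdim y') (cdim y)) as [E|]; [right | left; lia].
  repeat split; auto; congruence.
Qed.

Lemma matching_system_reach_dim {a b} :
  clos_trans _ matching_system_rel a b ->
  cdim (atgt b) < cdim (atgt a) \/ clos_trans _ matching_rel (atgt b) (atgt a).
Proof.
  induction 1 as [a b Hab | a c b _ IHac _ IHcb].
  - destruct (matching_system_rel_dim Hab); [left | right; apply t_step]; auto.
  - destruct IHac as [|Hca], IHcb as [|Hbc]; try (left; lia).
    + apply matching_rel_reach_dim in Hbc; left; lia.
    + apply matching_rel_reach_dim in Hca; left; lia.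
    + right; apply t_trans with (atgt c); auto.
Qed.

Lemma matching_system_order :
  partial_order_on (matching_system X D mu) (clos_trans _ matching_system_rel).
Proof.
  destruct Hmatch as (_ & _ & _ & _ & _ & _ & _ & _ & _ & _ & Hanti).
  split; [|split].
  - intros a Ha; apply t_step; split; [|split]; auto; exact (inhabits (amor a)).
  - intros a b c _ _ _; apply t_trans.
  - intros a b Ha Hb Hab Hba; apply matching_system_target_inj; auto.
    destruct (matching_system_reach_dim Hab) as [|Hab'], (matching_system_reach_dim Hba) as [|Hba'];
      try lia.
    + apply matching_rel_reach_dim in Hba'; lia.
    + apply matching_rel_reach_dim in Hab'; lia.
    + apply Hanti; auto; [apply Ha | apply Hb].
Qed.

Lemma matching_system_distinct_edges {a0 a1} :
  matching_system X D mu a0 -> matching_system X D mu a1 -> a0 <> a1 ->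
  exists y0 y1 (H0 : cgt (mu y0) y0) (H1 : cgt (mu y1) y1),
    D y0 /\ D y1 /\ y0 <> y1 /\
    a0 = @mkArr (Ent X) (mu y0) y0 (ent_edge H0) /\
    a1 = @mkArr (Ent X) (mu y1) y1 (ent_edge H1).
Proof.
  intros Ha0 Ha1 Hne.
  assert (Hy : atgt a0 <> atgt a1)
    by (intros E; apply Hne, matching_system_target_inj; auto).
  destruct (matching_system_edge Ha0) as (y0 & H0 & Hy0 & ->).
  destruct (matching_system_edge Ha1) as (y1 & H1 & Hy1 & ->).
  exists y0, y1, H0, H1; auto.
Qed.

Lemma matching_system_lifting a0 a1 :
  matching_system X D mu a0 -> matching_system X D mu a1 -> a0 <> a1 ->
  forall (g : Hom (Ent X) (asrc a0) (asrc a1)) (g' : Hom (Ent X) (atgt a0) (atgt a1)),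
    hle (comp (amor a0) g') (comp g (amor a1)) ->
    exists p : Hom (Ent X) (atgt a0) (asrc a1),
      hle (comp (amor a0) p) g /\ hle g' (comp p (amor a1)).
Proof.
  intros Ha0 Ha1 Hne.
  destruct (matching_system_distinct_edges Ha0 Ha1 Hne)
    as (y0 & y1 & H0 & H1 & _ & _ & Hy & -> & ->).
  exact (ent_lifting H0 H1 Hy).
Qed.

Lemma matching_system_switching a0 a1 :
  matching_system X D mu a0 -> matching_system X D mu a1 -> a0 <> a1 ->
  forall (h : Hom (Ent X) (asrc a0) (asrc a1)) (l : Hom (Ent X) (atgt a0) (atgt a1)),
    is_atom h -> is_atom l ->
    forall v : Hom (Ent X) (asrc a0) (atgt a1),
      hle (comp (amor a0) l) v -> hle (comp h (amor a1)) v ->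
      inhabited (Hom (Ent X) (atgt a0) (asrc a1)) /\
      (forall q : Hom (Ent X) (atgt a0) (asrc a1), is_atom q ->
         hle (comp (comp (amor a0) q) (amor a1)) v).
Proof.
  intros Ha0 Ha1 Hne.
  destruct (matching_system_distinct_edges Ha0 Ha1 Hne)
    as (y0 & y1 & H0 & H1 & Hy0 & Hy1 & Hy & -> & ->).
  intros h l _ _.
  exact (ent_switching H0 H1 (mu_codim1 Hy1) (not_eq_sym (mu_neq_down Hy1 Hy0)) Hy h l).
Qed.

End MatchingSystem.

Theorem proposition3p6 (X : RegCW) (D U M : cell X -> Prop) (mu : cell X -> cell X) :
  acyclic_partial_matching X D U M mu ->
  morse_system (Ent X) (matching_system X D mu).
Proof.
  intros Hmatch.
  split; [exact Ent_is_pcat|].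
  split; [exact Ent_cellular|].
  split; [exact (matching_system_exhaustion Hmatch)|].
  split; [exact (matching_system_order Hmatch)|].
  split; [exact (matching_system_lifting Hmatch)|].
  exact (matching_system_switching Hmatch).
Qed.
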